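(* Let $\mathfrak g$ be a symmetrizable Kac–Moody algebra of indefinite type whose generalized Cartan matrix $A$ ($n\times n$) is indecomposable with $\det A\ne0$. For $\gamma\in P^+(\mathfrak g)$, the set $U(\gamma)=\{\lambda\in P^+(\mathfrak g):\lambda-\gamma\in Q^+(\mathfrak g)\}$ is finite.
   Context: $P^+(\mathfrak g)$ is the set of dominant integral weights (nonnegative integer combinations of the fundamental weights $\omega_1,\dots,\omega_n$), and $Q^+(\mathfrak g)$ the set of nonnegative integer combinations of the simple roots. Indefinite type is in the sense of Kac's classification of indecomposable generalized Cartan matrices (neither finite nor affine type). *)

From HB Require Import structures.
From mathcomp Require Import all_boot all_order all_algebra.
From mathcomp Require Import classical_sets cardinality.
From mathcomp Require Import Rstruct.
Set Implicit Arguments. Unset Strict Implicit. Unset Printing Implicit Defensive.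
Import Order.TTheory GRing.Theory Num.Theory.
Local Open Scope ring_scope.

Definition is_GCM (n : nat) (A : 'M[int]_n) : Prop :=
  (forall i, A i i = 2) /\
  (forall i j, i != j -> A i j <= 0) /\
  (forall i j, A i j = 0 <-> A j i = 0).

Definition symmetrizable (n : nat) (A : 'M[int]_n) : Prop :=
  exists (D B : 'M[rat]_n),
    is_diag_mx D /\ D \in unitmx /\ B^T = B /\ map_mx (fun x : int => x%:~R) A = D *m B.

Definition indecomposable (n : nat) (A : 'M[int]_n) : Prop :=
  (0 < n)%N /\
  ~ (exists S : {set 'I_n}, [/\ S != finset.set0, S != [set: 'I_n] &
        forall i j, i \in S -> j \notin S -> A i j = 0]).

Definition Areal (n : nat) (A : 'M[int]_n) : 'M[Rdefinitions.R]_n :=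
  map_mx (fun x : int => x%:~R) A.
Definition vpos (n : nat) (v : 'cV[Rdefinitions.R]_n) : Prop := forall i, 0 < v i 0%R.
Definition vnneg (n : nat) (v : 'cV[Rdefinitions.R]_n) : Prop := forall i, 0 <= v i 0%R.

(* Kac, Theorem 4.3: (Fin) and (Aff). *)
Definition finite_type (n : nat) (A : 'M[int]_n) : Prop :=
  [/\ \det A != 0,
      (exists u : 'cV[Rdefinitions.R]_n, vpos u /\ vpos (Areal A *m u)) &
      (forall v : 'cV[Rdefinitions.R]_n, vnneg (Areal A *m v) -> vpos v \/ v = 0)].

Definition affine_type (n : nat) (A : 'M[int]_n) : Prop :=
  [/\ \rank (Areal A) = n.-1,
      (exists u : 'cV[Rdefinitions.R]_n, vpos u /\ Areal A *m u = 0) &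
      (forall v : 'cV[Rdefinitions.R]_n, vnneg (Areal A *m v) -> Areal A *m v = 0)].

Definition indefinite_type (n : nat) (A : 'M[int]_n) : Prop :=
  ~ finite_type A /\ ~ affine_type A.

(* Weights are written in the basis of fundamental weights omega_1..omega_n:
   lambda = sum_i lam i * omega_i, with lam : 'cV[int]_n.  Since
   alpha_j(alpha_i^vee) = a_ij, the simple root alpha_j has coordinates the
   j-th column of A. *)
Definition dominant (n : nat) (lam : 'cV[int]_n) : Prop := forall i, 0 <= lam i 0%R.

Definition in_Qplus (n : nat) (A : 'M[int]_n) (mu : 'cV[int]_n) : Prop :=
  exists k : 'cV[int]_n, (forall j, 0 <= k j 0%R) /\ mu = A *m k.

Definition U_set (n : nat) (A : 'M[int]_n) (gam : 'cV[int]_n) : set 'cV[int]_n :=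
  [set lam | dominant lam /\ in_Qplus A (lam - gam)].

From mathcomp Require Import all_boot all_order all_algebra.
From mathcomp Require Import classical_sets cardinality.
From mathcomp Require Import Rstruct.
From mathcomp Require Import lra.
Set Implicit Arguments. Unset Strict Implicit. Unset Printing Implicit Defensive.
Import Order.TTheory GRing.Theory Num.Theory.
Local Open Scope ring_scope.

(* Ville's theorem of alternatives, proved by Fourier-Motzkin elimination,
   gives either a semipositive y with A y >= 0 or some u >= 0 with u^T A < 0.
   In the first case indecomposability makes y positive, and together with
   det A != 0 this forces A to be of finite type (Kac, Thm. 4.3), which is
   excluded.  In the second case every lambda = gamma + A k in U(gamma)
   satisfies 0 <= u.lambda = u.gamma + (u^T A).k, and since all coefficients
   of u^T A are negative this bounds each k_j >= 0. *)

Section Alternative.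
Variable F : realFieldType.

Lemma exists_between (J : finType) (L H : {pred J}) (lo hi : J -> F) :
    (forall l j, l \in L -> j \in H -> lo l < hi j) ->
    (forall j, j \in H -> 0 < hi j) ->
  exists s, [/\ 0 <= s, forall l, l \in L -> lo l < s & forall j, j \in H -> s < hi j].
Proof.
move=> lo_lt_hi hi_gt0.
pose m := \big[Num.max/0]_(l in L) lo l.
have m_ge0 : 0 <= m := bigmax_ge_id _ _ _ _.
have lo_le_m l : l \in L -> lo l <= m by move=> Ll; apply: le_bigmax_cond.
pose M := \big[Num.min/m + 1]_(j in H) hi j.
have m_lt_M : m < M.
  apply: lt_bigmin => [|j Hj]; first lra.
  by apply: bigmax_lt => [|l Ll]; [exact: hi_gt0 | exact: lo_lt_hi].
have M_le_hi j : j \in H -> M <= hi j by move=> Hj; apply: bigmin_le_cond.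
exists ((m + M) / 2); split; [lra | move=> l /lo_le_m; lra | move=> j /M_le_hi; lra].
Qed.

Lemma exchange_sum_mul (I J : finType) (A : {pred I}) (B : {pred J})
    (f : I -> F) (g : I -> J -> F) (y : J -> F) :
  \sum_(i in A) f i * (\sum_(j in B) g i j * y j)
    = \sum_(j in B) (\sum_(i in A) f i * g i j) * y j.
Proof.
under eq_bigr do rewrite mulr_sumr.
rewrite exchange_big /=; apply: eq_bigr => j _.
by rewrite mulr_suml; apply: eq_bigr => i _; rewrite mulrA.
Qed.

Lemma sum_mul_delta (J : finType) (Q : {pred J}) (f : J -> F) j :
  j \in Q -> \sum_(l in Q) f l * (l == j)%:R = f j.
Proof.
move=> Qj; rewrite (bigD1 j) //= eqxx mulr1 big1 ?addr0 //.
by move=> l /andP[_ /negbTE ->]; rewrite mulr0.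
Qed.

Definition semipositive_solution (I J : finType) (P : {set I}) (Q : {set J})
    (M : I -> J -> F) (y : J -> F) : Prop :=
  [/\ forall j, j \in Q -> 0 <= y j, exists2 j, j \in Q & 0 < y j
    & forall i, i \in P -> 0 <= \sum_(j in Q) M i j * y j].

Definition negative_certificate (I J : finType) (P : {set I}) (Q : {set J})
    (M : I -> J -> F) (u : I -> F) : Prop :=
  (forall i, i \in P -> 0 <= u i) /\
  forall j, j \in Q -> \sum_(i in P) u i * M i j < 0.

Section FourierMotzkin.
Variables (J : finType) (Q : {set J}) (r : J -> F).

Lemma exists_fm_shift (a : J -> F) :
    (forall j, j \in Q -> 0 <= r j -> a j < 0) ->
    (forall j l, j \in Q -> l \in Q -> 0 < r j -> r l < 0 -> r j * a l < r l * a j) ->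
  exists2 s, 0 <= s & forall j, j \in Q -> s * r j + a j < 0.
Proof.
move=> a_lt0 a_cross.
have [|j /andP[Qj rj_gt0]|s [s_ge0 lo_lt_s s_lt_hi]] :=
  @exists_between _ [pred l | (l \in Q) && (r l < 0)] [pred j | (j \in Q) && (0 < r j)]
    (fun l => a l / - r l) (fun j => - a j / r j).
- move=> l j /andP[Ql rl_lt0] /andP[Qj rj_gt0].
  rewrite ltr_pdivrMr ?oppr_gt0 // mulrAC ltr_pdivlMr // mulrNN.
  by rewrite mulrC [a j * _]mulrC; apply: a_cross.
- by rewrite divr_gt0 // oppr_gt0 a_lt0 // ltW.
exists s => // j Qj; case: (ltrgt0P (r j)) => rj.
- by have := s_lt_hi j; rewrite inE Qj rj ltr_pdivlMr //= => /(_ isT); lra.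
- have := lo_lt_s j; rewrite inE Qj rj ltr_pdivrMr ?oppr_gt0 //= mulrN => /(_ isT).
  lra.
- by rewrite rj mulr0 add0r a_lt0 ?rj.
Qed.

(* Eliminating the row r: the vectors fm_gen p, p in fm_pairs, are the unit
   vectors e_j with r j >= 0 and the vectors r j e_l - r l e_j with
   r j > 0 > r l; they generate the cone of y >= 0 on Q with r.y >= 0. *)
Definition fm_pairs : {set J * J} :=
  [set p | [&& p.1 \in Q, p.2 \in Q &
     ((p.1 == p.2) && (0 <= r p.1)) || ((0 < r p.1) && (r p.2 < 0))]].

Definition fm_gen (p : J * J) (l : J) : F :=
  if p.1 == p.2 then (l == p.1)%:R
  else r p.1 * (l == p.2)%:R - r p.2 * (l == p.1)%:R.

Lemma sum_fm_gen (f : J -> F) p : p \in fm_pairs ->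
  \sum_(l in Q) f l * fm_gen p l =
    if p.1 == p.2 then f p.1 else r p.1 * f p.2 - r p.2 * f p.1.
Proof.
rewrite inE => /and3P[Qp1 Qp2 _]; rewrite /fm_gen.
case: eqP => _; first exact: sum_mul_delta.
under eq_bigr do rewrite mulrBr mulrCA [f _ * (r p.2 * _)]mulrCA.
by rewrite sumrB -!mulr_sumr !sum_mul_delta.
Qed.

Lemma fm_gen_ge0 p l : p \in fm_pairs -> 0 <= fm_gen p l.
Proof.
rewrite inE /fm_gen => /and3P[_ _]; case: eqP => _ /=; first by rewrite ler0n.
case/andP=> r1_gt0 r2_lt0; rewrite subr_ge0 (@le_trans _ _ 0) //.
  by rewrite mulr_le0_ge0 ?ler0n ?ltW.
by rewrite mulr_ge0 ?ler0n ?ltW.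
Qed.

Lemma fm_gen_gt0 p : p \in fm_pairs -> 0 < fm_gen p p.2.
Proof.
rewrite inE /fm_gen => /and3P[_ _]; case: eqP => [-> _|/eqP p12]; first by rewrite eqxx ltr01.
by rewrite eqxx eq_sym (negbTE p12) mulr1 mulr0 subr0 => /andP[].
Qed.

Lemma sum_r_fm_gen_ge0 p : p \in fm_pairs -> 0 <= \sum_(l in Q) r l * fm_gen p l.
Proof.
move=> Pp; rewrite sum_fm_gen //; move: Pp; rewrite inE => /and3P[_ _].
case: eqP => _ /=; last by rewrite mulrC subrr.
by case/orP => [// | /andP[/ltW]].
Qed.

End FourierMotzkin.

Section FourierMotzkinStep.
Variables (I J : finType) (P : {set I}) (Q : {set J}) (M : I -> J -> F) (i0 : I).
Hypothesis Pi0 : i0 \in P.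

Local Notation pairs := (fm_pairs Q (M i0)).
Local Notation gen := (fm_gen (M i0)).

Definition fm_matrix (i : I) (p : J * J) : F := \sum_(l in Q) M i l * gen p l.

Lemma fm_lift_solution (y : J * J -> F) :
  semipositive_solution (P :\ i0) pairs fm_matrix y ->
  semipositive_solution P Q M (fun l => \sum_(p in pairs) gen p l * y p).
Proof.
case=> y_ge0 [p0 Pp0 y_p0_gt0] My_ge0; split.
- move=> j _; apply: sumr_ge0 => p Pp.
  by apply: mulr_ge0; [exact: (fm_gen_ge0 _ Pp) | exact: y_ge0].
- exists p0.2; first by move: Pp0; rewrite inE => /and3P[].
  rewrite (bigD1 p0) //= ltr_pwDl ?mulr_gt0 //; first exact: (fm_gen_gt0 Pp0).
  apply: sumr_ge0 => p /andP[Pp _].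
  by apply: mulr_ge0; [exact: (fm_gen_ge0 _ Pp) | exact: y_ge0].
move=> i Pi; rewrite exchange_sum_mul.
have [->|i_neq_i0] := eqVneq i i0.
  apply: sumr_ge0 => p Pp.
  by apply: mulr_ge0; [exact: (sum_r_fm_gen_ge0 Pp) | exact: y_ge0].
by apply: My_ge0; rewrite in_setD1 i_neq_i0.
Qed.

Lemma fm_lift_certificate (u : I -> F) :
  negative_certificate (P :\ i0) pairs fm_matrix u ->
  exists v, negative_certificate P Q M v.
Proof.
case=> u_ge0 uM_lt0.
pose a l := \sum_(i in P :\ i0) u i * M i l.
have a_gen p : p \in pairs -> \sum_(i in P :\ i0) u i * fm_matrix i p =
    if p.1 == p.2 then a p.1 else M i0 p.1 * a p.2 - M i0 p.2 * a p.1.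
  by move=> Pp; rewrite -(sum_fm_gen _ Pp) exchange_sum_mul.
have [||s s_ge0 sa_lt0] := exists_fm_shift (Q := Q) (r := M i0) (a := a).
- move=> j Qj rj_ge0; have Pjj : (j, j) \in pairs by rewrite inE /= Qj eqxx rj_ge0.
  by have := uM_lt0 _ Pjj; rewrite a_gen //= eqxx.
- move=> j l Qj Ql rj_gt0 rl_lt0; rewrite -subr_lt0.
  have Pjl : (j, l) \in pairs by rewrite inE /= Qj Ql rj_gt0 rl_lt0 orbT.
  have j_neq_l : j != l by apply: contraTneq rl_lt0 => <-; rewrite -leNgt ltW.
  by have := uM_lt0 _ Pjl; rewrite a_gen //= (negbTE j_neq_l).
exists (fun i => if i == i0 then s else u i); split.
  by move=> i Pi; case: eqP => // /eqP i_neq_i0; rewrite u_ge0 // in_setD1 i_neq_i0.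
move=> j Qj; rewrite (big_setD1 i0) //= eqxx.
rewrite (eq_bigr (fun i => u i * M i j)) => [|i]; first exact: sa_lt0.
by rewrite in_setD1 => /andP[/negbTE ->].
Qed.

End FourierMotzkinStep.

Theorem ville (I J : finType) (P : {set I}) (Q : {set J}) (M : I -> J -> F) :
  (exists y, semipositive_solution P Q M y) \/ (exists u, negative_certificate P Q M u).
Proof.
move cardP: #|P| => k; elim: k J P Q M cardP => [|k IHk] J P Q M cardP.
  rewrite (cards0_eq cardP).
  have [->|[j0 Qj0]] := set_0Vmem Q.
    by right; exists (fun _ => 0); split => // j; rewrite inE.
  by left; exists (fun _ => 1); split => // [|i]; [exists j0 | rewrite inE].
have [i0 Pi0] : exists i0, i0 \in P by apply/set0Pn; rewrite -card_gt0 cardP.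
have cardP' : #|P :\ i0| = k by move: cardP; rewrite (cardsD1 i0) Pi0 add1n => -[].
have [[y y_sol]|[u u_cert]] := IHk _ _ (fm_pairs Q (M i0)) (fm_matrix Q M i0) cardP'.
  by left; eexists; exact: fm_lift_solution y_sol.
by right; exact: (fm_lift_certificate Pi0 u_cert).
Qed.

Corollary ville_mx m n (M : 'M[F]_(m, n)) :
  (exists y : 'cV[F]_n,
     [/\ y != 0, forall j, 0 <= y j 0 & forall i, 0 <= (M *m y) i 0]) \/
  (exists u : 'rV[F]_m, (forall i, 0 <= u 0 i) /\ forall j, (u *m M) 0 j < 0).
Proof.
have [[y [y_ge0 [j0 _ y_j0_gt0] My_ge0]]|[u [u_ge0 uM_lt0]]] :=
  ville [set: 'I_m] [set: 'I_n] (fun i j => M i j).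
- left; exists (\col_j y j); split.
  + by apply: contraTneq y_j0_gt0 => /matrixP/(_ j0 0); rewrite !mxE => ->; rewrite ltxx.
  + by move=> j; rewrite mxE y_ge0 ?finset.in_setT.
  + move=> i; rewrite mxE; under eq_bigr do rewrite mxE.
    by have := My_ge0 i (finset.in_setT i); rewrite (eq_bigl _ _ (@finset.in_setT _)).
- right; exists (\row_i u i); split; first by move=> i; rewrite mxE u_ge0 ?finset.in_setT.
  move=> j; rewrite mxE; under eq_bigr do rewrite mxE.
  by have := uM_lt0 j (finset.in_setT j); rewrite (eq_bigl _ _ (@finset.in_setT _)).
Qed.

End Alternative.

Notation RR := Rdefinitions.R.

Lemma exists_boundary_shift n (y v : 'cV[RR]_n) i0 : vpos y -> v i0 0 < 0 ->
  exists t i, [/\ 0 < t, vnneg (v + t *: y) & (v + t *: y) i 0 = 0].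
Proof.
move=> y_gt0 v_i0_lt0; pose f i := - v i 0 / y i 0.
have [im _ f_max] := @arg_maxP _ _ _ i0 predT f isT.
have f_le i : f i <= f im := f_max i isT.
have f_i0_gt0 : 0 < f i0 by rewrite divr_gt0 ?oppr_gt0.
exists (f im), im; split.
- exact: lt_le_trans f_i0_gt0 (f_le i0).
- by move=> i; rewrite !mxE; have := f_le i; rewrite {1}/f ler_pdivrMr //; lra.
- by rewrite !mxE /f divfK ?lt0r_neq0 // addrN.
Qed.

Section KacMoody.
Variables (n : nat) (A : 'M[int]_n).
Hypotheses (A_gcm : is_GCM A) (A_indec : indecomposable A).

Lemma indecomposable_vnneg_pos_or0 w :
  vnneg w -> vnneg (Areal A *m w) -> vpos w \/ w = 0.
Proof.
move=> w_ge0 Aw_ge0; have [_ [A_offdiag _]] := A_gcm; have [_ A_split] := A_indec.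
pose S := [set i | w i 0 == 0].
have [S0|S_neq0] := eqVneq S finset.set0.
  left=> i; rewrite lt_def w_ge0 andbT; apply/eqP => wi0.
  have : i \in S by rewrite inE wi0.
  by rewrite S0 inE.
have [ST|S_neqT] := eqVneq S [set: 'I_n].
  right; apply/matrixP => i j; rewrite (ord1 j) mxE.
  have : i \in S by rewrite ST finset.in_setT.
  by rewrite inE => /eqP.
exfalso; apply: A_split; exists S; split=> // i j; rewrite !inE => /eqP wi0 wj_neq0.
have t_ge0 l : 0 <= - (A i l)%:~R * w l 0 :> RR.
  have [->|l_neq_i] := eqVneq l i; first by rewrite wi0 mulr0.
  by rewrite mulr_ge0 ?w_ge0 // oppr_ge0 lerz0 A_offdiag // eq_sym.
have t_sum0 : \sum_l - (A i l)%:~R * w l 0 = 0 :> RR.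
  apply/eqP; rewrite eq_le sumr_ge0 ?andbT //.
  under eq_bigr do rewrite mulNr; rewrite sumrN oppr_le0.
  by have := Aw_ge0 i; rewrite mxE; under eq_bigr do rewrite mxE.
have /eqP := psumr_eq0P (fun l _ => t_ge0 l) t_sum0 (i := j) isT.
by rewrite mulf_eq0 oppr_eq0 intr_eq0 (negbTE wj_neq0) orbF => /eqP.
Qed.

Lemma vnneg_mul_pos_or0 y : vpos y -> vnneg (Areal A *m y) -> Areal A *m y != 0 ->
  forall v, vnneg (Areal A *m v) -> vpos v \/ v = 0.
Proof.
move=> y_gt0 Ay_ge0 Ay_neq0 v Av_ge0.
have [/forallP v_ge0|/forallPn[i0]] := boolP [forall i, 0 <= v i 0].
  exact: indecomposable_vnneg_pos_or0.
rewrite -ltNge => v_i0_lt0; exfalso.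
have [t [i [t_gt0 w_ge0 w_i0]]] := exists_boundary_shift y_gt0 v_i0_lt0.
have Aw_ge0 : vnneg (Areal A *m (v + t *: y)).
  move=> k; rewrite mulmxDr -scalemxAr; move: (Av_ge0 k) (Ay_ge0 k).
  by rewrite !mxE => Av_k_ge0 Ay_k_ge0; rewrite addr_ge0 // mulr_ge0 // ltW.
have [w_gt0|/eqP] := indecomposable_vnneg_pos_or0 w_ge0 Aw_ge0.
  by have := w_gt0 i; rewrite w_i0 ltxx.
rewrite addr_eq0 => /eqP v_eq; move/negP: Ay_neq0; apply; apply/eqP/matrixP => k l.
rewrite (ord1 l) [RHS]mxE; apply/eqP; rewrite eq_le Ay_ge0 andbT.
have := Av_ge0 k; rewrite v_eq mulmxN -scalemxAr.
by rewrite !mxE oppr_ge0 pmulr_rle0.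
Qed.

Lemma finite_type_of_semipositive (y : 'cV[RR]_n) :
  \det A != 0 -> y != 0 -> vnneg y -> vnneg (Areal A *m y) -> finite_type A.
Proof.
move=> detA y_neq0 y_ge0 Ay_ge0.
have A_unit : Areal A \in unitmx by rewrite unitmxE unitfE /Areal det_map_mx intr_eq0.
have [y_gt0|y0] := indecomposable_vnneg_pos_or0 y_ge0 Ay_ge0; last by rewrite y0 eqxx in y_neq0.
have Ay_neq0 : Areal A *m y != 0.
  by apply: contraNneq y_neq0 => Ay0; rewrite -(mulKmx A_unit y) Ay0 mulmx0.
have fin_c := vnneg_mul_pos_or0 y_gt0 Ay_ge0 Ay_neq0.
split=> //; pose u : 'cV[RR]_n := invmx (Areal A) *m const_mx 1; exists u.
have Au_gt0 : vpos (Areal A *m u) by move=> i; rewrite mulKVmx // mxE ltr01.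
split=> //; have [//|u0] := fin_c u (fun i => ltW (Au_gt0 i)).
have [n_gt0 _] := A_indec; have := Au_gt0 (Ordinal n_gt0).
by rewrite u0 mulmx0 mxE ltxx.
Qed.

End KacMoody.

Lemma finite_int_box n (m : int) :
  finite_set [set k : 'cV[int]_n | forall j, 0 <= k j 0 <= m].
Proof.
apply: (@sub_finite_set _ _
  (map_mx (fun x : 'I_(absz m).+1 => (x : nat)%:Z) @` setT)); last first.
  exact/finite_image/finite_finset.
move=> k /= k_box; have k_lt i j : (absz (k i j) < (absz m).+1)%N.
  have /andP[k_ge0 k_le_m] := k_box i.
  by rewrite (ord1 j) ltnS -lez_nat !gez0_abs // (le_trans k_ge0).
exists (\matrix_(i, j) Ordinal (k_lt i j)) => //; apply/matrixP => i j.
by rewrite !mxE /= gez0_abs // (ord1 j); case/andP: (k_box i).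
Qed.

Section NegativeCovector.
Variables (n : nat) (A : 'M[int]_n) (u : 'rV[RR]_n).
Hypotheses (u_ge0 : forall i, 0 <= u 0 i) (uA_lt0 : forall j, (u *m Areal A) 0 j < 0).

Let c := u *m Areal A.
Local Notation realv v := (map_mx (fun x : int => x%:~R : RR) v).

Lemma Qplus_coord_le (gam lam k : 'cV[int]_n) : dominant lam -> (forall j, 0 <= k j 0) ->
  lam - gam = A *m k -> forall j, (k j 0)%:~R <= (u *m realv gam) 0 0 / - c 0 j.
Proof.
move=> lam_ge0 k_ge0 lam_eq j; rewrite ler_pdivlMr ?oppr_gt0 //.
have lam_eq' : realv lam = realv gam + Areal A *m realv k.
  by rewrite -map_mxM -lam_eq map_mxB addrC subrK.
have : 0 <= (u *m realv lam) 0 0.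
  by rewrite mxE; apply: sumr_ge0 => i _; rewrite mxE mulr_ge0 ?ler0z.
rewrite lam_eq' mulmxDr mulmxA -/c [X in 0 <= X]mxE [(c *m _) 0 0]mxE (bigD1 j) //=.
have : \sum_(l | l != j) c 0 l * realv k l 0 <= 0.
  apply: sumr_le0 => l _; apply: mulr_le0_ge0; first exact: ltW.
  by rewrite mxE ler0z.
rewrite [realv k j 0]mxE mulrN; lra.
Qed.

Lemma finite_U_set_neg_covector (gam : 'cV[int]_n) : finite_set (U_set A gam).
Proof.
pose m := \big[Num.max/0]_j Num.floor ((u *m realv gam) 0 0 / - c 0 j).
apply: (@sub_finite_set _ _
  ((fun k => gam + A *m k) @` [set k : 'cV[int]_n | forall j, 0 <= k j 0 <= m])).
  move=> lam [lam_ge0 [k [k_ge0 lam_eq]]].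
  exists k; last by rewrite -lam_eq addrC subrK.
  move=> j; rewrite k_ge0 (le_trans _ (le_bigmax _ _ j)) //.
  by rewrite floor_ge_int (Qplus_coord_le lam_ge0 k_ge0 lam_eq).
exact/finite_image/finite_int_box.
Qed.

End NegativeCovector.

Theorem proposition5p3 (n : nat) (A : 'M[int]_n) :
  is_GCM A -> symmetrizable A -> indecomposable A -> indefinite_type A ->
  \det A != 0 ->
  forall gam : 'cV[int]_n, dominant gam -> finite_set (U_set A gam).
Proof.
move=> A_gcm _ A_indec [not_finite _] detA gam _.
have [[y [y_neq0 y_ge0 Ay_ge0]]|[u [u_ge0 uA_lt0]]] := ville_mx (Areal A).
  by case: not_finite; exact: finite_type_of_semipositive y_neq0 y_ge0 Ay_ge0.
exact: finite_U_set_neg_covector u_ge0 uA_lt0 gam.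
Qed.
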